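(* Let $\ell\le d\le n/2$ and suppose $d$ is unknown to the algorithm. Any adaptive randomized group testing algorithm that, with probability at least $2/3$, detects $\ell$ defective items must make (in the worst case) at least $\ell\log(n/d)-1$ tests when the defective set has size $d$.
   Context: Group testing: items $X=[n]$, unknown defective set $I\subseteq X$ with $d=|I|$. A test $Q\subseteq X$ has answer $1$ if $Q\cap I\neq\emptyset$ and $0$ otherwise; the algorithm accesses $I$ only through tests, and in an adaptive algorithm tests may depend on previous answers. ''Detects $\ell$ defective items'' means it outputs $L\subseteq I$ with $|L|=\ell$. ''$d$ is unknown'' means the algorithm receives no information about $|I|$ and must succeed for every defective set $I$ with $|I|\ge \ell$. Logarithms are base 2. *)

From mathcomp Require Import all_boot all_order all_algebra.
From mathcomp Require Import all_classical all_reals all_analysis.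
Set Implicit Arguments. Unset Strict Implicit. Unset Printing Implicit Defensive.
Import Order.TTheory GRing.Theory Num.Theory.
Local Open Scope ring_scope.
Local Open Scope classical_set_scope.

(* A deterministic adaptive group-testing algorithm on the items 'I_n is a
   (finite) decision tree: either it stops and outputs a set L, or it asks the
   test Q and continues with [t0] if the answer is 0 (Q :&: I = set0) and with
   [t1] if the answer is 1. *)
Inductive gtree (n : nat) : Type :=
  | GLeaf of {set 'I_n}
  | GTest of {set 'I_n} & gtree n & gtree n.

Definition test_answer n (Q I : {set 'I_n}) : bool := Q :&: I != finset.set0.

Fixpoint gout n (t : gtree n) (I : {set 'I_n}) : {set 'I_n} :=
  match t with
  | GLeaf L => L
  | GTest Q t0 t1 => if test_answer Q I then gout t1 I else gout t0 I
  end.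

Fixpoint gtests n (t : gtree n) (I : {set 'I_n}) : nat :=
  match t with
  | GLeaf _ => 0
  | GTest Q t0 t1 => (if test_answer Q I then gtests t1 I else gtests t0 I).+1
  end.

Definition detects n (ell : nat) (t : gtree n) (I : {set 'I_n}) : bool :=
  (gout t I \subset I) && (#|gout t I| == ell).

(* A randomized adaptive algorithm: a discrete probability distribution over
   deterministic decision trees, presented as weights [p k] on a countable
   index set nat together with the tree [alg k] chosen with weight [p k].
   (Every randomized algorithm induces such a distribution, since the set of
   decision trees is countable.) *)
Definition is_distribution {R : realType} (p : nat -> R) : Prop :=
  (forall k, 0 <= p k) /\ (\esum_(k in [set: nat]) (p k)%:E = 1%E).

Definition success_prob {R : realType} n (ell : nat) (p : nat -> R)
  (alg : nat -> gtree n) (I : {set 'I_n}) : \bar R :=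
  \esum_(k in [set k | detects ell (alg k) I]) (p k)%:E.

Definition log2 {R : realType} (x : R) : R := ln x / ln 2.

(* Yao's principle: since the algorithm succeeds with probability at least
   2/3 on every d-set, some tree in its support succeeds on at least 2/3 of the
   'C(n, d) d-sets.  A tree of depth h has at most 2^h leaves, and a leaf
   outputting an ell-set L detects only supersets of L, of which at most
   'C(n - ell, d - ell) <= (d/n)^ell 'C(n, d) have size d.  Hence
   (2/3) (n/d)^ell <= 2^h, i.e. h >= ell log(n/d) - log(3/2). *)

From mathcomp Require Import all_boot all_order all_algebra.
From mathcomp Require Import all_classical all_reals all_analysis.
From mathcomp Require Import zify lra.
Set Implicit Arguments. Unset Strict Implicit. Unset Printing Implicit Defensive.
Import Order.TTheory GRing.Theory Num.Theory.

Lemma expn_bin_sub_le n d l : l <= d -> d <= n ->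
  n ^ l * 'C(n - l, d - l) <= d ^ l * 'C(n, d).
Proof.
elim: l => [|l IH] lt_ld le_dn; first by rewrite !subn0.
have {}IH := IH (ltnW lt_ld) le_dn.
have pascal : (n - l) * 'C(n - l.+1, d - l.+1) = (d - l) * 'C(n - l, d - l).
  by have := mul_bin_diag (n - l) (d - l.+1); rewrite subnSK // -subn1 -subnDA addn1.
have cross : n * (d - l) <= d * (n - l) by nia.
have n_gt_l : 0 < n - l by lia.
rewrite -(leq_pmul2l n_gt_l) mulnCA !expnS -mulnA pascal.
by have := leq_mul cross IH; nia.
Qed.

Lemma card_supersets_le (T : finType) (L : {set T}) d :
  #|[set I : {set T} | L \subset I & #|I| == d]| <= 'C(#|T| - #|L|, d - #|L|).
Proof.
set F := [set I : {set T} | _].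
have inj : {in F &, injective (fun I => I :\: L)}.
  move=> I J; rewrite !inE => /andP[LI _] /andP[LJ _] /setP eqIJ.
  apply/setP => x; have := eqIJ x; rewrite !inE.
  by case: (boolP (x \in L)) => [xL|_] //=; rewrite (fintype.subsetP LI) ?(fintype.subsetP LJ).
have card_compl : #|~: L| = #|T| - #|L| by rewrite -(cardsC L) addKn.
rewrite -(card_in_imset inj) -card_compl -cards_draws.
apply/subset_leq_card/fintype.subsetP => _ /imsetP[I /[!inE] /andP[LI /eqP <-] ->].
rewrite cardsDS // eqxx andbT.
by apply/fintype.subsetP => x; rewrite !inE => /andP[].
Qed.

Lemma detects_GTest n ell Q (t0 t1 : gtree n) I :
  detects ell (GTest Q t0 t1) I = detects ell (if test_answer Q I then t1 else t0) I.
Proof. by rewrite /detects /=; case: ifP. Qed.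

Lemma card_detects_le n ell d h (t : gtree n) (S : {set {set 'I_n}}) :
  {in S, forall I : {set 'I_n}, #|I| = d /\ gtests t I <= h} ->
  #|[set I in S | detects ell t I]| <= 2 ^ h * 'C(n - ell, d - ell).
Proof.
elim: t h S => [L|Q t0 IH0 t1 IH1] h S shallow.
  have [cardL|cardL] := eqVneq #|L| ell; last first.
    by rewrite eq_card0 // => I; rewrite !inE /detects /= (negPf cardL) !andbF.
  have pow_gt0 : 0 < 2 ^ h by rewrite expn_gt0.
  apply: leq_trans (leq_pmull _ pow_gt0).
  rewrite -cardL; have := card_supersets_le L d; rewrite card_ord; apply: leq_trans.
  apply/subset_leq_card/fintype.subsetP => I; rewrite !inE /detects /=.
  by case/and3P => /shallow[-> _] -> _; rewrite eqxx.
case: h shallow => [|h] shallow.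
  by rewrite eq_card0 // => I; rewrite !inE; apply/negP => /andP[/shallow[_]].
pose S_ b := [set I in S | test_answer Q I == b].
have shallow_ b :
    {in S_ b, forall I : {set 'I_n}, #|I| = d /\ gtests (if b then t1 else t0) I <= h}.
  move=> I; rewrite inE => /andP[/shallow[cardI tests] /eqP answer]; split=> //.
  by case: b answer tests => /= ->.
rewrite expnS mul2n -addnn mulnDl -(cardsID [set I | test_answer Q I]).
apply: leq_add.
  apply: leq_trans (IH1 _ _ (shallow_ true)); apply/subset_leq_card/fintype.subsetP => I.
  by rewrite /S_ !inE detects_GTest; case: test_answer; rewrite /= ?andbF ?andbT.
apply: leq_trans (IH0 _ _ (shallow_ false)); apply/subset_leq_card/fintype.subsetP => I.
by rewrite /S_ !inE detects_GTest; case: test_answer; rewrite /= ?andbF ?andbT.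
Qed.

Local Open Scope ring_scope.

Section Averaging.
Variables (R : realType) (T : finType) (p : nat -> R) (E : nat -> pred T).
Hypothesis p_distr : is_distribution p.

Let p_ge0 k : 0 <= p k. Proof. by case: p_distr. Qed.

Lemma sum_esum_exchange (S : {set T}) :
  (\sum_(I in S) \esum_(k in [set k | E k I]%classic) (p k)%:E =
   \esum_(k in [set: nat]) (p k * #|[set I in S | E k I]|%:R)%:E)%E.
Proof.
under eq_bigr do rewrite esum_mkcond.
rewrite -esum_sum; last by move=> k I _ _; case: ifP; rewrite ?lee_fin.
apply: eq_esum => k _.
rewrite -big_mkcondr sumEFin (eq_bigl (mem [set I in S | E k I])).
  by rewrite sumr_const mulr_natr.
by move=> I; rewrite !inE; congr andb; apply/idP/idP => [/set_mem|/mem_set].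
Qed.

Lemma esum_scale_distribution (c : R) : 0 <= c ->
  (\esum_(k in [set: nat]) (c * p k)%:E = c%:E)%E.
Proof.
move=> c_ge0; have p_ge0E k : (0 <= (p k)%:E)%E by rewrite lee_fin.
rewrite (eq_esum (fun k _ => EFinM _ _)) -nneseries_esumT; last first.
  by move=> k; rewrite mule_ge0.
rewrite nneseriesZl // nneseries_esumT //.
by case: p_distr => _ ->; rewrite mule1.
Qed.

Lemma exists_pos_weight : exists k, 0 < p k.
Proof.
apply: contrapT => /forallNP p_le0; case: p_distr => _.
rewrite esum1 => [[] /eqP|k _]; first by rewrite eq_sym oner_eq0.
apply/eqP; rewrite eqe eq_le p_ge0 andbT leNgt; exact/negP/p_le0.
Qed.

Lemma exists_frequent_success (S : {set T}) :
  {in S, forall I, ((2 / 3 : R)%:E <= \esum_(k in [set k | E k I]%classic) (p k)%:E)%E} ->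
  exists k, 0 < p k /\ (2 * #|S| <= 3 * #|[set I in S | E k I]|)%N.
Proof.
move=> succ; have [S_empty|S_gt0] := posnP #|S|.
  by have [k pk_gt0] := exists_pos_weight; exists k; rewrite S_empty.
apply: contrapT => /forallNP rare.
pose N := #|S|%:R : R.
have rare_bound k : p k * #|[set I in S | E k I]|%:R <= (2 * N - 1) / 3 * p k.
  have [->|pk_neq0] := eqVneq (p k) 0; first by rewrite mul0r mulr0.
  have pk_gt0 : 0 < p k by rewrite lt0r pk_neq0 p_ge0.
  have : (3 * #|[set I in S | E k I]| < 2 * #|S|)%N.
    by rewrite ltnNge; apply/negP => frequent; apply: (rare k).
  rewrite -addn1 -(ler_nat R) natrD !natrM; nra.
have N_ge1 : 1 <= N by rewrite ler1n.
have : ((N * (2 / 3))%:E <= ((2 * N - 1) / 3)%:E)%E.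
  apply: le_trans (_ : (\sum_(I in S) \esum_(k in [set k | E k I]%classic) (p k)%:E <= _)%E).
    by apply: le_trans (lee_sum _ succ); rewrite sumEFin sumr_const /N mulr_natl.
  rewrite sum_esum_exchange -esum_scale_distribution; last lra.
  by apply: le_esum => k _; rewrite lee_fin rare_bound.
rewrite lee_fin; lra.
Qed.

End Averaging.

Lemma expn_le_of_frequent_detection n ell d h (t : gtree n) :
  (ell <= d)%N -> (d <= n)%N ->
  let S := [set I : {set 'I_n} | #|I| == d] in
  {in S, forall I, gtests t I <= h}%N ->
  (2 * #|S| <= 3 * #|[set I in S | detects ell t I]|)%N ->
  (n ^ ell <= d ^ ell * 2 ^ h.+1)%N.
Proof.
move=> le_ld le_dn S shallow frequent.
have cardS : #|S| = 'C(n, d) by rewrite card_draws card_ord.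
have M_gt0 : (0 < 'C(n - ell, d - ell))%N by rewrite bin_gt0 leq_sub2r.
have few : (#|[set I in S | detects ell t I]| <= 2 ^ h * 'C(n - ell, d - ell))%N.
  by apply: card_detects_le => I IS; split; [move: IS; rewrite inE => /eqP|exact: shallow].
have ratio := expn_bin_sub_le le_ld le_dn.
have : (2 * (n ^ ell * 'C(n - ell, d - ell))
         <= 3 * (d ^ ell * (2 ^ h * 'C(n - ell, d - ell))))%N.
  apply: leq_trans (_ : 2 * (d ^ ell * 'C(n, d)) <= _)%N; first by rewrite leq_mul2l ratio orbT.
  rewrite mulnCA [(3 * _)%N]mulnCA leq_mul2l -cardS.
  by apply/orP; right; apply: leq_trans frequent _; rewrite leq_mul2l few orbT.
rewrite -(leq_pmul2r M_gt0) expnS; nia.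
Qed.

Lemma log2_ratio_le (R : realType) (n d m h : nat) : (0 < n)%N -> (0 < d)%N ->
  (n ^ m <= d ^ m * 2 ^ h)%N -> m%:R * log2 (n%:R / d%:R : R) <= h%:R.
Proof.
move=> n_gt0 d_gt0 le_pow.
have ln2_gt0 : 0 < ln (2 : R) by rewrite ln_gt0 // ltr1n.
have ratio_gt0 : 0 < n%:R / d%:R :> R by rewrite divr_gt0 ?ltr0n.
rewrite /log2 mulrA ler_pdivrMr // (mulr_natl (ln _) m) (mulr_natl (ln 2) h) -!lnXn //.
rewrite ler_ln ?posrE ?exprn_gt0 // expr_div_n ler_pdivrMr ?exprn_gt0 ?ltr0n //.
by rewrite -!natrX -natrM ler_nat mulnC.
Qed.

Theorem theorem6 (R : realType) (n ell d : nat) (p : nat -> R)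
    (alg : nat -> gtree n) :
  (ell <= d)%N -> (2 * d <= n)%N ->
  is_distribution p ->
  (* d unknown: success w.p. >= 2/3 for every defective set of size >= ell *)
  (forall I : {set 'I_n}, (ell <= #|I|)%N ->
      ((2%:R / 3%:R : R)%:E <= success_prob ell p alg I)%E) ->
  (* worst case over defective sets of size d and over the randomness *)
  exists I : {set 'I_n}, #|I| = d /\
    exists k, 0 < p k /\
      ell%:R * log2 (R := R) (n%:R / d%:R) - 1 <= (gtests (alg k) I)%:R.
Proof.
move=> le_ld le_2dn distr succ.
have le_dn : (d <= n)%N by apply: leq_trans le_2dn; rewrite leq_pmull.
pose S := [set I : {set 'I_n} | #|I| == d].
have [k [pk_gt0 frequent]] : exists k, 0 < p k /\
    (2 * #|S| <= 3 * #|[set I in S | detects ell (alg k) I]|)%N.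
  apply: (exists_frequent_success distr) => I; rewrite inE => /eqP cardI.
  by apply: succ; rewrite cardI.
have S_gt0 : (0 < #|S|)%N by rewrite card_draws card_ord bin_gt0.
have [I0 I0S deepest] := eq_bigmax_cond (fun I => gtests (alg k) I) S_gt0.
exists I0; split; first by move: I0S; rewrite inE => /eqP.
exists k; split => //.
have [->|ell_gt0] := posnP ell; first by rewrite mul0r sub0r (le_trans _ (ler0n _ _)) // lerN10.
have shallow : {in S, forall I, gtests (alg k) I <= gtests (alg k) I0}%N.
  by move=> I IS; rewrite -deepest; apply: leq_bigmax_cond.
have := expn_le_of_frequent_detection le_ld le_dn shallow frequent.
move/(log2_ratio_le R (leq_trans ell_gt0 (leq_trans le_ld le_dn)) (leq_trans ell_gt0 le_ld)).
by rewrite -addn1 natrD lerBlDr.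
Qed.
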